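(* Let $X$ be a complete separable metric space, identified with its image under a fixed isometric embedding $\iota:X\to\ell_\infty(\mathbb{N})$. Let $(K_n)_{n\in\mathbb{N}}$ be a sequence of non-empty compact subsets of $X$ with $K_n\subset K_m$ for $n\le m$, let $M,L,\Delta>0$, and let $h_n:\ell_\infty(\mathbb{N})\to[0,\infty)$, $h_n(x)=\sum_{k=1}^n\min\{n\,d(x,K_k),1\}$. If $(P^i=(p^i_0,\dots,p^i_{n(i)}))_{i\in\mathbb{N}}$ is a sequence of discrete paths in $X$ with $\lim_{i\to\infty}\mathrm{Mesh}(P^i)=0$, $\mathrm{Len}(P^i)\le L$, $\mathrm{diam}(P^i)\ge\Delta$ and $\sum_{k=0}^{n(i)-1}h_i(p^i_k)d(p^i_k,p^i_{k+1})\le M$ for every $i$, then a subsequence of $(P^i)$ converges to a curve $\gamma:[0,1]\to X$.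
   Context: A discrete path is a sequence $P=(p_0,\dots,p_n)$ of points of $X$ with $n\ge1$; $\mathrm{Mesh}(P)=\max_{k\le n-1}d(p_k,p_{k+1})$, $\mathrm{diam}(P)=\max_{k,l}d(p_k,p_l)$, $\mathrm{Len}(P)=\sum_{k=0}^{n-1}d(p_k,p_{k+1})$. Distances $d(x,K)=\inf_{a\in K}d(x,a)$ are taken in $\ell_\infty(\mathbb{N})$. The linearly interpolating curve $\gamma_P:[0,1]\to\ell_\infty(\mathbb{N})$ is constant $p_0$ if $\mathrm{Len}(P)=0$; otherwise with $t_0=0$, $t_k=\sum_{i=0}^{k-1}d(p_i,p_{i+1})/\mathrm{Len}(P)$, $\gamma_P(t_k)=p_k$ and $\gamma_P$ is affine on each $[t_k,t_{k+1}]$ with $t_k<t_{k+1}$. A sequence of discrete paths $P^i$ converges to a curve $\gamma:[0,1]\to X$ if $\gamma_{P^i}\to\gamma$ uniformly and $\mathrm{Mesh}(P^i)\to0$. *)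

(* l_oo(N) is modelled as the bounded real
   sequences (nat -> R, R : realType) with the sup distance. *)
From HB Require Import structures.
From mathcomp Require Import all_boot all_order all_algebra.
From mathcomp Require Import all_classical all_reals.
From mathcomp Require Import topology normedtype.
Import numFieldNormedType.Exports.
Set Implicit Arguments. Unset Strict Implicit. Unset Printing Implicit Defensive.
Import Order.TTheory GRing.Theory Num.Theory.
Local Open Scope classical_set_scope.
Local Open Scope ring_scope.

Section Linf.
Variable R : realType.

Definition linf := nat -> R.

Definition bounded_seq (x : linf) : Prop := exists C : R, forall j, `|x j| <= C.

Definition ldist (x y : linf) : R := sup (range (fun j => `|x j - y j|)).

Definition setdist (x : linf) (K : set linf) : R :=
  inf [set ldist x a | a in K].

Definition complete_sub (X : set linf) : Prop :=
  forall u : nat -> linf, (forall k, X (u k)) ->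
    (forall e : R, 0 < e -> exists N, forall k l, (N <= k)%N -> (N <= l)%N ->
        ldist (u k) (u l) < e) ->
    exists2 x, X x & forall e : R, 0 < e -> exists N, forall k, (N <= k)%N ->
        ldist (u k) x < e.

Definition separable_sub (X : set linf) : Prop :=
  exists D : nat -> linf, (forall k, X (D k)) /\
    forall x, X x -> forall e : R, 0 < e -> exists k, ldist x (D k) < e.

Definition compact_sub (K : set linf) : Prop :=
  forall u : nat -> linf, (forall k, K (u k)) ->
    exists phi : nat -> nat, (forall k, (phi k < phi k.+1)%N) /\
      exists2 x, K x & forall e : R, 0 < e -> exists N, forall k, (N <= k)%N ->
        ldist (u (phi k)) x < e.

(* A discrete path P = (p 0, ..., p n), n >= 1, is given by (n, p). *)
Definition Mesh (n : nat) (p : nat -> linf) : R :=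
  \big[Num.max/0]_(k < n) ldist (p k) (p k.+1).

Definition diam (n : nat) (p : nat -> linf) : R :=
  \big[Num.max/0]_(k < n.+1) \big[Num.max/0]_(l < n.+1) ldist (p k) (p l).

Definition Len (n : nat) (p : nat -> linf) : R :=
  \sum_(k < n) ldist (p k) (p k.+1).

Definition tk (n : nat) (p : nat -> linf) (k : nat) : R :=
  (\sum_(i < k) ldist (p i) (p i.+1)) / Len n p.

Definition seg_param (n : nat) (p : nat -> linf) (k : nat) (t : R) : R :=
  if tk n p k < tk n p k.+1 then
    Num.min 1 (Num.max 0 ((t - tk n p k) / (tk n p k.+1 - tk n p k)))
  else 0.

(* The linearly interpolating curve gamma_P : [0,1] -> l_oo (given on all of R;
   only its values on [0,1] matter).  On [t_k, t_{k+1}] (with t_k < t_{k+1}) it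
   is the affine map from p_k to p_{k+1}. *)
Definition gammaP (n : nat) (p : nat -> linf) (t : R) : linf :=
  if Len n p == 0 then p 0%N
  else fun j => p 0%N j + \sum_(k < n) seg_param n p k t * (p k.+1 j - p k j).

Definition hfun (K : nat -> set linf) (n : nat) (x : linf) : R :=
  \sum_(1 <= k < n.+1) Num.min (n%:R * setdist x (K k)) 1.

Definition weighted_len (h : linf -> R) (n : nat) (p : nat -> linf) : R :=
  \sum_(k < n) h (p k) * ldist (p k) (p k.+1).

Definition paths_converge (n : nat -> nat) (p : nat -> nat -> linf)
    (gamma : R -> linf) : Prop :=
  (forall e : R, 0 < e -> exists N, forall i, (N <= i)%N ->
     forall t : R, 0 <= t <= 1 -> ldist (gammaP (n i) (p i) t) (gamma t) < e)
  /\ (fun i => Mesh (n i) (p i)) @ \oo --> (0 : R).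

Definition curve_in (X : set linf) (gamma : R -> linf) : Prop :=
  (forall t : R, 0 <= t <= 1 -> X (gamma t)) /\
  (forall t : R, 0 <= t <= 1 -> forall e : R, 0 < e -> exists2 d : R, 0 < d &
     forall s : R, 0 <= s <= 1 -> `|s - t| < d -> ldist (gamma s) (gamma t) < e).

End Linf.

(* Since d(x, K_k) >= d(x, K_m) for k <= m, the weight h_i is at least m at every
   node farther than 1/i from K_m (m <= i).  So the segments of P^i starting at such far
   nodes have total length at most M/m, and as diam P^i >= Delta > M/m for m large, some
   node is near K_m.  Walking along P^i from any node to the closest near node then shows
   that every node, hence every point of gamma_{P^i}, lies within 1/i + 2 Mesh(P^i) + M/m
   of the compact set K_m.  Thus for each t the points gamma_{P^i}(t) have Cauchy
   subsequences; a diagonal argument over the grid points j/N of [0,1], together with the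
   uniform Lipschitz bound Len(P^i) <= L, makes a subsequence of the curves uniformly
   Cauchy.  Since the nodes lie in the complete space X and are Mesh-close to the curves,
   the subsequence converges uniformly to an L-Lipschitz curve in X. *)

From HB Require Import structures.
From mathcomp Require Import all_boot all_order all_algebra.
From mathcomp Require Import all_classical all_reals.
From mathcomp Require Import topology normedtype.
From mathcomp Require Import ring lra.
Import numFieldNormedType.Exports.
Import Order.TTheory GRing.Theory Num.Theory.
Local Open Scope classical_set_scope.
Local Open Scope ring_scope.

Set Implicit Arguments. Unset Strict Implicit. Unset Printing Implicit Defensive.

Ltac case_minmax := repeat match goal with
  | |- context [Order.min ?a ?b] => case: (leP a b)
  | |- context [Order.max ?a ?b] => case: (leP a b)
  end; intros.

(** * The sup distance *)

Section Ldist.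
Variable R : realType.
Implicit Types x y z : linf R.

Lemma ler_coord_ldist x y j : bounded_seq x -> bounded_seq y ->
  `|x j - y j| <= ldist x y.
Proof.
move=> [Cx Hx] [Cy Hy]; have hub : has_ubound (range (fun j => `|x j - y j|)).
  by exists (Cx + Cy) => _ [k _ <-]; apply: le_trans (ler_normB _ _) (lerD _ _).
exact: (ub_le_sup hub) (ex_intro2 _ _ j I erefl).
Qed.

Lemma ldist_le x y c : (forall j, `|x j - y j| <= c) -> ldist x y <= c.
Proof.
move=> H; apply: ge_sup; first by exists `|x 0%N - y 0%N|, 0%N.
by move=> _ [k _ <-].
Qed.

Lemma ldist_ge0 x y : bounded_seq x -> bounded_seq y -> 0 <= ldist x y.
Proof. by move=> bx bY; exact: le_trans (normr_ge0 _) (ler_coord_ldist 0 bx bY). Qed.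

Lemma ldistC x y : ldist x y = ldist y x.
Proof.
rewrite /ldist (_ : (fun j => `|x j - y j|) = (fun j => `|y j - x j|)) //.
by rewrite funeqE => j; rewrite distrC.
Qed.

Lemma ldist_triangle x y z : bounded_seq x -> bounded_seq y -> bounded_seq z ->
  ldist x z <= ldist x y + ldist y z.
Proof.
move=> bx bY bz; apply: ldist_le => j.
by apply: le_trans (ler_distD (y j) _ _) (lerD _ _); apply: ler_coord_ldist.
Qed.

Lemma ldistxx x : bounded_seq x -> ldist x x = 0.
Proof.
move=> bx; apply/eqP; rewrite eq_le ldist_ge0 // andbT.
by apply: ldist_le => j; rewrite subrr normr0.
Qed.

End Ldist.

(** * Arclength and the interpolating curve *)

Section Arclength.
Variables (R : realType) (n : nat) (p : nat -> linf R).
Hypothesis p_bounded : forall k, (k <= n)%N -> bounded_seq (p k).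

Definition seglen k := ldist (p k) (p k.+1).
Definition arclen k := \sum_(l < k) seglen l.

Lemma seglen_ge0 k : (k < n)%N -> 0 <= seglen k.
Proof. by move=> kn; apply: ldist_ge0; apply: p_bounded => //; apply: ltnW. Qed.

Lemma seglen_le_Mesh k : (k < n)%N -> seglen k <= Mesh n p.
Proof. by move=> kn; exact: (le_bigmax 0 (fun l : 'I_n => seglen l) (Ordinal kn)). Qed.

Lemma Mesh_ge0 : 0 <= Mesh n p.
Proof. exact: bigmax_ge_id. Qed.

Lemma arclen0 : arclen 0 = 0.
Proof. exact: big_ord0. Qed.

Lemma arclenS k : arclen k.+1 = arclen k + seglen k.
Proof. exact: big_ord_recr. Qed.

Lemma ler_arclen k l : (k <= l)%N -> (l <= n)%N -> arclen k <= arclen l.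
Proof.
move=> kl ln; elim: l kl ln => [|l IH]; first by rewrite leqn0 => /eqP ->.
rewrite leq_eqVlt => /orP [/eqP -> //|kl] ln.
by rewrite arclenS -[arclen k]addr0 lerD ?IH ?seglen_ge0 // ltnW.
Qed.

Lemma arclen_ge0 k : (k <= n)%N -> 0 <= arclen k.
Proof. by move=> kn; rewrite -arclen0; apply: ler_arclen. Qed.

Lemma ldist_le_arclen j k : (j <= k)%N -> (k <= n)%N ->
  ldist (p j) (p k) <= arclen k - arclen j.
Proof.
have refl i : (i <= n)%N -> ldist (p i) (p i) <= arclen i - arclen i.
  by move=> ?; rewrite ldistxx ?subrr //; apply: p_bounded.
elim: k => [|k IH]; first by rewrite leqn0 => /eqP ->; apply: refl.
rewrite leq_eqVlt => /orP [/eqP ->|jk] kn; first exact: refl.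
have bj : bounded_seq (p j) by apply: p_bounded; apply: leq_trans (ltnW kn).
apply: le_trans (ldist_triangle bj (p_bounded (ltnW kn)) (p_bounded kn)) _.
by rewrite arclenS addrAC lerD2r IH // ltnW.
Qed.

Lemma diam_le_Len : diam n p <= Len n p.
Proof.
rewrite (_ : Len n p = arclen n) //.
apply: bigmax_le => [|k _]; first exact: arclen_ge0.
apply: bigmax_le => [|l _]; first exact: arclen_ge0.
have kn : (k <= n)%N by rewrite -ltnS.
have ln : (l <= n)%N by rewrite -ltnS.
have := arclen_ge0 kn; have := arclen_ge0 ln.
have := ler_arclen kn (leqnn n); have := ler_arclen ln (leqnn n).
case: (leqP k l) => [kl|/ltnW lk]; last rewrite ldistC.
  by have := ldist_le_arclen kl ln; lra.
by have := ldist_le_arclen lk kn; lra.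
Qed.

Lemma exists_arclen_near u : 0 <= u <= arclen n ->
  exists2 k, (k <= n)%N & `|arclen k - u| <= Mesh n p.
Proof.
suff near_prefix m : (m <= n)%N -> 0 <= u <= arclen m ->
    exists2 k, (k <= m)%N & `|arclen k - u| <= Mesh n p by exact: near_prefix.
elim: m => [|m IH] mn /andP [u0 um].
  exists 0%N => //; rewrite arclen0 in um *.
  have -> : u = 0 by apply/eqP; rewrite eq_le um u0.
  by rewrite subrr normr0 Mesh_ge0.
case: (leP u (arclen m)) => um'.
  by have [k km hk] := IH (ltnW mn) (introT andP (conj u0 um')); exists k => //; apply: leqW.
exists m.+1 => //; have := seglen_le_Mesh mn; rewrite arclenS in um *.
by rewrite ger0_norm; lra.
Qed.

(* [seg_progress k u] is the length of the part of segment [k] covered at arclength [u]. *)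
Definition seg_progress k (u : R) := Num.min (seglen k) (Num.max 0 (u - arclen k)).

Lemma sum_seg_progress m u : (m <= n)%N ->
  \sum_(k < m) seg_progress k u = Num.min (arclen m) (Num.max 0 u).
Proof.
elim: m => [|m IH] mn; first by rewrite big_ord0 arclen0; case_minmax; lra.
rewrite big_ord_recr /= IH ?(ltnW mn) // arclenS /seg_progress.
have := arclen_ge0 (ltnW mn); have := seglen_ge0 mn.
move: (arclen m) (seglen m) => a b ha hb; case_minmax; lra.
Qed.

Lemma sum_seg_progress_lipschitz u v :
  \sum_(k < n) `|seg_progress k u - seg_progress k v| <= `|u - v|.
Proof.
wlog vu : u v / v <= u.
  move=> W; case: (leP v u) => [|/ltW uv]; first exact: W.
  by rewrite distrC; under eq_bigr do rewrite distrC; apply: W.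
rewrite (eq_bigr (fun k : 'I_n => seg_progress k u - seg_progress k v)); last first.
  by move=> k _; rewrite ger0_norm // subr_ge0 /seg_progress; case_minmax; lra.
rewrite sumrB !sum_seg_progress // ger0_norm ?subr_ge0 //.
have := arclen_ge0 (leqnn n); move: (arclen n) => a ha; case_minmax; lra.
Qed.

Lemma seg_progress_arclen k l : (k <= n)%N -> (l < n)%N ->
  seg_progress l (arclen k) = (l < k)%N%:R * seglen l.
Proof.
move=> kn ln; rewrite /seg_progress; have := seglen_ge0 ln.
case: (ltnP l k) => [lk|kl]; rewrite ?mul1r ?mul0r.
  by have := ler_arclen lk kn; rewrite arclenS; case_minmax; lra.
have := ler_arclen kl (ltnW ln); case_minmax; lra.
Qed.

End Arclength.

Lemma clamp01_mulr (R : realType) (y d : R) : 0 < d ->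
  Num.min 1 (Num.max 0 y) * d = Num.min d (Num.max 0 (y * d)).
Proof. by move=> d0; case_minmax; nra. Qed.

Section Interpolation.
Variables (R : realType) (n : nat) (p : nat -> linf R).
Hypothesis p_bounded : forall k, (k <= n)%N -> bounded_seq (p k).
Hypothesis Len_gt0 : 0 < Len n p.

Lemma seg_param_seglen k t : (k < n)%N ->
  seg_param n p k t * seglen p k = seg_progress p k (t * Len n p).
Proof.
move=> kn; rewrite /seg_param /seg_progress.
have -> : tk n p k = arclen p k / Len n p by [].
have -> : tk n p k.+1 = arclen p k.+1 / Len n p by [].
rewrite arclenS; have := seglen_ge0 p_bounded kn.
move: (arclen p k) (seglen p k) (Len n p) Len_gt0 => a d l l0.
rewrite le_eqVlt => /orP [/eqP <-|d0]; first by rewrite addr0 ltxx mul0r; case_minmax; lra.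
rewrite ltr_pM2r ?invr_gt0 // ltrDl d0 clamp01_mulr //; congr (Num.min _ (Num.max _ _)).
by field; rewrite addrC addKr !gt_eqF.
Qed.

Lemma gammaP_coord t j :
  gammaP n p t j = p 0%N j + \sum_(k < n) seg_param n p k t * (p k.+1 j - p k j).
Proof. by rewrite /gammaP gt_eqF. Qed.

Lemma node_coord k j : (k <= n)%N ->
  p k j = p 0%N j + \sum_(l < n) (l < k)%N%:R * (p l.+1 j - p l j).
Proof.
move=> kn; rewrite (eq_bigr (fun l : 'I_n => if (l < k)%N then p l.+1 j - p l j else 0));
  last by move=> l _; case: ltnP; rewrite ?mul1r ?mul0r.
rewrite -big_mkcond -(big_mkord (fun l => l < k)%N (fun l => p l.+1 j - p l j)).
by rewrite -(big_nat_widen _ _ _ xpredT) // telescope_sumr // addrC subrK.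
Qed.

Lemma coord_combination_le (a b : nat -> R) j :
  `|\sum_(l < n) a l * (p l.+1 j - p l j) - \sum_(l < n) b l * (p l.+1 j - p l j)|
    <= \sum_(l < n) `|a l * seglen p l - b l * seglen p l|.
Proof.
rewrite -sumrB; apply: le_trans (ler_norm_sum _ _ _) (ler_sum _ _) => l _.
have ln := ltn_ord l; have bl := p_bounded (ltnW ln); have bl1 := p_bounded ln.
rewrite -!mulrBl !normrM (ger0_norm (seglen_ge0 p_bounded ln)) ler_wpM2l //.
by rewrite distrC; apply: ler_coord_ldist.
Qed.

(* The node [p k] is the point of the curve at arclength [arclen p k]. *)
Lemma coord_gammaP_node t k j : (k <= n)%N ->
  `|gammaP n p t j - p k j| <= `|t * Len n p - arclen p k|.
Proof.
move=> kn; rewrite gammaP_coord (node_coord j kn) opprD addrACA subrr add0r.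
apply: le_trans (coord_combination_le (seg_param n p ^~ t) (fun l => (l < k)%N%:R) j) _.
under eq_bigr => l _ do
  rewrite seg_param_seglen // -(seg_progress_arclen p_bounded kn (ltn_ord l)).
exact: sum_seg_progress_lipschitz.
Qed.

Lemma ldist_gammaP_node t k : (k <= n)%N ->
  ldist (gammaP n p t) (p k) <= `|t * Len n p - arclen p k|.
Proof. by move=> kn; apply: ldist_le => j; apply: coord_gammaP_node. Qed.

Lemma gammaP_bounded t : bounded_seq (gammaP n p t).
Proof.
have [C HC] := p_bounded (leq0n n); exists (C + `|t * Len n p - arclen p 0|) => j.
have := coord_gammaP_node t j (leq0n n); have := HC j.
have := ler_distD (p 0%N j) (gammaP n p t j) 0; rewrite !subr0 distrC; lra.
Qed.

Lemma gammaP_near_node t : 0 <= t <= 1 ->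
  exists2 k, (k <= n)%N & ldist (gammaP n p t) (p k) <= Mesh n p.
Proof.
move=> /andP [t0 t1]; have u0 : 0 <= t * Len n p by rewrite mulr_ge0 // ltW.
have un : t * Len n p <= arclen p n by rewrite ler_piMl // ltW.
have [k kn hk] := exists_arclen_near (introT andP (conj u0 un)).
by exists k => //; apply: le_trans (ldist_gammaP_node _ kn) _; rewrite distrC.
Qed.

Lemma ldist_gammaP t s :
  ldist (gammaP n p t) (gammaP n p s) <= Len n p * `|t - s|.
Proof.
apply: ldist_le => j; rewrite !gammaP_coord opprD addrACA subrr add0r.
apply: le_trans (coord_combination_le (seg_param n p ^~ t) (seg_param n p ^~ s) j) _.
under eq_bigr => l _ do rewrite !seg_param_seglen //.
apply: le_trans (sum_seg_progress_lipschitz p_bounded _ _) _.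
by rewrite -mulrBl normrM mulrC (gtr0_norm Len_gt0).
Qed.

End Interpolation.

(** * Nodes are close to K_m *)

Section FarLength.
Variables (R : realType) (n : nat) (p : nat -> linf R) (near : pred nat).
Hypothesis p_bounded : forall k, (k <= n)%N -> bounded_seq (p k).

Definition far_len k := \sum_(l < k | ~~ near l) seglen p l.

Lemma far_len0 : far_len 0 = 0.
Proof. exact: big_ord0. Qed.

Lemma far_lenS k : far_len k.+1 = far_len k + (if near k then 0 else seglen p k).
Proof. by rewrite /far_len big_mkcond big_ord_recr /= -big_mkcond; case: (near k). Qed.

Lemma ler_far_len k l : (k <= l)%N -> (l <= n)%N -> far_len k <= far_len l.
Proof.
move=> kl ln; elim: l kl ln => [|l IH]; first by rewrite leqn0 => /eqP ->.
rewrite leq_eqVlt => /orP [/eqP -> //|kl] ln.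
rewrite far_lenS -[far_len k]addr0 lerD ?IH ?(ltnW ln) //.
case: ifP => _; first exact: lexx.
by have := seglen_ge0 p_bounded ln.
Qed.

Lemma far_len_ge0 k : (k <= n)%N -> 0 <= far_len k.
Proof. by move=> kn; rewrite -far_len0; apply: ler_far_len. Qed.

Lemma walk_to_next_near j l : (j <= l)%N -> (l <= n)%N -> near l ->
  exists l', [/\ (j <= l' <= l)%N, near l' & ldist (p j) (p l') <= far_len l' - far_len j].
Proof.
move=> jl ln near_l.
suff walk d i : (i + d)%N = l -> exists l',
    [/\ (i <= l' <= l)%N, near l' & ldist (p i) (p l') <= far_len l' - far_len i].
  exact: walk (l - j)%N j (subnKC jl).
elim: d i => [|d IH] i idl.
  rewrite addn0 in idl; subst i; exists l; split; rewrite ?leqnn //.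
  by rewrite ldistxx ?subrr //; apply: p_bounded.
have il : (i < l)%N by rewrite -idl addnS ltnS leq_addr.
have bi : bounded_seq (p i) by apply: p_bounded; apply: ltnW (leq_trans il ln).
case near_i: (near i).
  exists i; split; rewrite ?leqnn ?(ltnW il) //.
  by rewrite ldistxx ?subrr.
have idl' : (i.+1 + d)%N = l by rewrite addSnnS.
have [l' [/andP [il' l'l] near_l' hl']] := IH i.+1 idl'.
exists l'; split; rewrite ?(ltnW il') ?l'l //.
have bi1 : bounded_seq (p i.+1) by apply: p_bounded; apply: leq_trans il ln.
have bl' : bounded_seq (p l') by apply: p_bounded; apply: leq_trans l'l ln.
apply: le_trans (ldist_triangle bi bi1 bl') _.
by move: hl'; rewrite far_lenS near_i /seglen; lra.
Qed.

Lemma walk_to_prev_near l j : (l <= j)%N -> (j <= n)%N -> near l ->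
  exists l', [/\ (l <= l' <= j)%N, near l' &
    ldist (p j) (p l') <= Mesh n p + (far_len j - far_len l')].
Proof.
move=> lj jn near_l; elim: j lj jn => [|j IH].
  rewrite leqn0 => /eqP l0 _; subst l; exists 0%N; split => //.
  by rewrite ldistxx ?subrr ?addr0 ?Mesh_ge0 //; apply: p_bounded.
rewrite leq_eqVlt => /orP [/eqP <-|]; last rewrite ltnS => lj jn.
  exists l; split; rewrite ?leqnn //.
  by rewrite ldistxx ?subrr ?addr0 ?Mesh_ge0 //; apply: p_bounded.
have bj := p_bounded (ltnW jn); have bj1 := p_bounded jn.
have step_le := seglen_le_Mesh p jn; rewrite /seglen ldistC in step_le.
case near_j: (near j).
  exists j; split; rewrite ?lj ?leqnSn //.
  by have := ler_far_len (leqnSn j) jn; lra.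
have [l' [/andP [ll' l'j] near_l' hl']] := IH lj (ltnW jn).
exists l'; split; rewrite ?ll' ?(leqW l'j) //.
have bl' : bounded_seq (p l') by apply: p_bounded; apply: leq_trans l'j (ltnW jn).
apply: le_trans (ldist_triangle bj1 bj bl') _.
by rewrite far_lenS near_j /seglen (ldistC (p j) (p j.+1)); lra.
Qed.

Lemma exists_near_node_close j : (j <= n)%N -> (exists2 l, (l <= n)%N & near l) ->
  exists l, [/\ (l <= n)%N, near l & ldist (p j) (p l) <= Mesh n p + far_len n].
Proof.
move=> jn [l ln near_l]; have M0 := Mesh_ge0 n p.
case: (leqP j l) => [jl|/ltnW lj].
  have [l' [/andP [jl' l'l] near_l' hl']] := walk_to_next_near jl ln near_l.
  exists l'; split; rewrite ?(leq_trans l'l ln) //.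
  by have := far_len_ge0 jn; have := ler_far_len (leq_trans l'l ln) (leqnn n); lra.
have [l' [/andP [ll' l'j] near_l' hl']] := walk_to_prev_near lj jn near_l.
exists l'; split; rewrite ?(leq_trans l'j jn) //.
by have := ler_far_len jn (leqnn n); have := far_len_ge0 (leq_trans l'j jn); lra.
Qed.

End FarLength.

Section SetDist.
Variable R : realType.
Implicit Types (x : linf R) (A B : set (linf R)).

Definition bounded_points A := forall a, A a -> bounded_seq a.

Lemma setdist_ge0 x A : bounded_seq x -> A !=set0 -> bounded_points A ->
  0 <= setdist x A.
Proof.
move=> bx [a Aa] bA; apply: lb_le_inf; first by exists (ldist x a), a.
by move=> _ [b Ab <-]; apply: ldist_ge0 => //; apply: bA.
Qed.

Lemma setdist_le_ldist x A a : bounded_seq x -> bounded_points A -> A a ->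
  setdist x A <= ldist x a.
Proof.
move=> bx bA Aa; apply: ge_inf; last by exists a.
by exists 0 => _ [b Ab <-]; apply: ldist_ge0 => //; apply: bA.
Qed.

Lemma le_setdist_subset x A B : bounded_seq x -> A `<=` B -> A !=set0 ->
  bounded_points B -> setdist x B <= setdist x A.
Proof.
move=> bx AB [a Aa] bB; apply: lb_le_inf; first by exists (ldist x a), a.
by move=> _ [b Ab <-]; apply: setdist_le_ldist => //; apply: AB.
Qed.

Lemma setdist_lt x A c : A !=set0 -> setdist x A < c -> exists2 a, A a & ldist x a < c.
Proof.
move=> [a Aa] /(inf_lt (ex_intro _ (ldist x a) (ex_intro2 _ _ a Aa erefl))).
by move=> [_ [b Ab <-] hb]; exists b.
Qed.

End SetDist.

Section PenaltyBound.
Variables (R : realType) (K : nat -> set (linf R)) (i m : nat).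
Hypothesis K_nonempty : forall k, (1 <= k)%N -> K k !=set0.
Hypothesis K_bounded : forall k, (1 <= k)%N -> bounded_points (K k).
Hypothesis K_increasing : forall k l, (1 <= k)%N -> (k <= l)%N -> K k `<=` K l.
Hypotheses (m_ge1 : (1 <= m)%N) (m_le_i : (m <= i)%N).

Lemma hfun_term_ge0 x k : bounded_seq x -> (1 <= k)%N ->
  0 <= Num.min (i%:R * setdist x (K k)) 1.
Proof.
move=> bx k1; have := setdist_ge0 bx (K_nonempty k1) (K_bounded k1).
have : 0 <= i%:R :> R by [].
move: (setdist x (K k)) (i%:R : R) => a b a0 b0; case_minmax; nra.
Qed.

Lemma hfun_ge0 x : bounded_seq x -> 0 <= hfun K i x.
Proof.
move=> bx; rewrite /hfun big_nat_cond; apply: sumr_ge0 => k /andP [/andP [k1 _] _].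
exact: hfun_term_ge0.
Qed.

(* Every [K k] with [k <= m] lies in [K m], so all of the first [m] terms equal [1]. *)
Lemma hfun_ge_far x : bounded_seq x -> i%:R^-1 <= setdist x (K m) -> m%:R <= hfun K i x.
Proof.
move=> bx far; have i0 : 0 < i%:R :> R by rewrite ltr0n; apply: leq_trans m_le_i.
rewrite /hfun (big_cat_nat (_ : (1 <= m.+1)%N) (_ : (m.+1 <= i.+1)%N)) //.
have -> : \sum_(1 <= k < m.+1) Num.min (i%:R * setdist x (K k)) 1 = m%:R.
  rewrite big_nat_cond (eq_bigr (fun _ => 1)); last first.
    move=> k /andP [/andP [k1 km] _].
    have : setdist x (K m) <= setdist x (K k).
      apply: le_setdist_subset => //; first exact: K_increasing.
        exact: K_nonempty.
      exact: K_bounded.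
    move/(le_trans far)/(ler_wpM2l (ltW i0)); rewrite mulfV ?gt_eqF //.
    by move: (_ * _) => a a1; case_minmax; lra.
  by rewrite -big_nat_cond sumr_const_nat subn1.
rewrite lerDl big_nat_cond; apply: sumr_ge0 => k /andP [/andP [k1 _] _].
by apply: hfun_term_ge0 => //; apply: leq_trans k1.
Qed.

Variables (n : nat) (p : nat -> linf R).
Hypothesis p_bounded : forall k, (k <= n)%N -> bounded_seq (p k).

Definition near_Km l := setdist (p l) (K m) < i%:R^-1.

Lemma far_len_le_weighted_len :
  m%:R * far_len p near_Km n <= weighted_len (hfun K i) n p.
Proof.
rewrite /far_len /weighted_len mulr_sumr big_mkcond /=; apply: ler_sum => l _.
have ln := ltn_ord l; have bl := p_bounded (ltnW ln); have d0 := seglen_ge0 p_bounded ln.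
rewrite /near_Km; case: ltP => [_|far] /=; last by rewrite ler_wpM2r // hfun_ge_far.
by rewrite mulr_ge0 // hfun_ge0.
Qed.

Variables (M Delta : R).
Hypothesis weighted_len_le : weighted_len (hfun K i) n p <= M.
Hypothesis diam_ge : Delta <= diam n p.
Hypothesis m_large : M < m%:R * Delta.

Lemma node_near_K j : (j <= n)%N ->
  exists2 a, K m a & ldist (p j) a <= i%:R^-1 + Mesh n p + M / m%:R.
Proof.
move=> jn; have m0 : 0 < m%:R :> R by rewrite ltr0n.
have far_le : far_len p near_Km n <= M / m%:R.
  by rewrite ler_pdivlMr // mulrC; apply: le_trans far_len_le_weighted_len weighted_len_le.
have [some_near|all_far] := pselect (exists2 l, (l <= n)%N & near_Km l); last first.
  (* Otherwise the whole length is penalised: m Delta <= m Len <= M. *)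
  have Len_le : Len n p <= far_len p near_Km n.
    rewrite /far_len (eq_bigl xpredT) // => l; apply/negP => near_l.
    by apply: all_far; exists l => //; apply: ltnW.
  have Delta_le := le_trans diam_ge (le_trans (diam_le_Len p_bounded) Len_le).
  have := le_trans (ler_wpM2l (ltW m0) Delta_le) far_len_le_weighted_len.
  by move/le_trans/(_ weighted_len_le)/(lt_le_trans m_large); rewrite ltxx.
have [l [ln near_l hl]] := exists_near_node_close p_bounded jn some_near.
have [a Ka ha] := setdist_lt (K_nonempty m_ge1) near_l.
exists a => //; have ba := K_bounded m_ge1 Ka.
apply: le_trans (ldist_triangle (p_bounded jn) (p_bounded ln) ba) _; lra.
Qed.

Hypothesis Len_gt0 : 0 < Len n p.

Lemma gammaP_near_K t : 0 <= t <= 1 ->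
  exists2 a, K m a & ldist (gammaP n p t) a <= i%:R^-1 + 2 * Mesh n p + M / m%:R.
Proof.
move=> t01; have [k kn hk] := gammaP_near_node p_bounded Len_gt0 t01.
have [a Ka ha] := node_near_K kn; exists a => //.
have bg := gammaP_bounded p_bounded Len_gt0 t.
apply: le_trans (ldist_triangle bg (p_bounded kn) (K_bounded m_ge1 Ka)) _; lra.
Qed.

End PenaltyBound.

(** * Diagonal subsequences *)

Definition strictly_increasing (phi : nat -> nat) := forall i, (phi i < phi i.+1)%N.

Section StrictlyIncreasing.
Variable phi : nat -> nat.
Hypothesis phi_incr : strictly_increasing phi.

Lemma strictly_increasing_lt i j : (i < j)%N -> (phi i < phi j)%N.
Proof. exact: homo_ltn ltn_trans phi_incr i j. Qed.

Lemma strictly_increasing_ge i : (i <= phi i)%N.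
Proof. by elim: i => [//|i IH]; apply: leq_ltn_trans IH (phi_incr i). Qed.

Lemma strictly_increasing_comp psi :
  strictly_increasing psi -> strictly_increasing (phi \o psi).
Proof. by move=> psi_incr i; apply: strictly_increasing_lt. Qed.

End StrictlyIncreasing.

Lemma exists_nat_mul_gt (R : realType) (c e : R) : 0 < e ->
  exists N : nat, forall k, (N <= k)%N -> c < k%:R * e.
Proof.
move=> e0; exists (Num.Def.archi_bound (Num.max 0 (c / e))) => k Nk.
have c_le : c / e <= Num.max 0 (c / e) by rewrite le_max lexx orbT.
have max_ge0 : 0 <= Num.max 0 (c / e) by rewrite le_max lexx.
rewrite -ltr_pdivrMr //; apply: le_lt_trans c_le (lt_le_trans (archi_boundP max_ge0) _).
by rewrite ler_nat.
Qed.

Section Cauchy.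
Variable R : realType.

Definition cauchy_seq (u : nat -> linf R) := forall e : R, 0 < e -> exists N,
  forall k l, (N <= k)%N -> (N <= l)%N -> ldist (u k) (u l) < e.

Definition converges (u : nat -> linf R) (x : linf R) := forall e : R, 0 < e ->
  exists N, forall k, (N <= k)%N -> ldist (u k) x < e.

Lemma converges_cauchy u x : (forall k, bounded_seq (u k)) -> bounded_seq x ->
  converges u x -> cauchy_seq u.
Proof.
move=> bu bx ux e e0; have [N HN] := ux _ (divr_gt0 e0 (ltr0n R 2)).
exists N => k l Nk Nl; apply: le_lt_trans (ldist_triangle (bu k) bx (bu l)) _.
by rewrite (ldistC x); have := HN k Nk; have := HN l Nl; lra.
Qed.

Lemma cauchy_seq_common (u : nat -> nat -> linf R) J :
  (forall j, (j <= J)%N -> cauchy_seq (u j)) ->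
  forall e : R, 0 < e -> exists N, forall j, (j <= J)%N ->
    forall k l, (N <= k)%N -> (N <= l)%N -> ldist (u j k) (u j l) < e.
Proof.
move=> u_cauchy e e0; elim: J u_cauchy => [|J IH] u_cauchy.
  have [N HN] := u_cauchy 0%N (leqnn 0) e e0.
  by exists N => j; rewrite leqn0 => /eqP ->.
have [N1 HN1] := IH (fun j jJ => u_cauchy j (leqW jJ)).
have [N2 HN2] := u_cauchy J.+1 (leqnn _) e e0.
exists (maxn N1 N2) => j jJ k l; rewrite !geq_max => /andP [N1k N2k] /andP [N1l N2l].
by move: jJ; rewrite leq_eqVlt => /orP [/eqP ->|]; [exact: HN2 | move/HN1; apply].
Qed.

Section Diagonal.
Variables (u : nat -> nat -> linf R) (ch : nat -> (nat -> nat) -> nat -> nat).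
Hypothesis ch_spec : forall r psi, strictly_increasing psi ->
  strictly_increasing (ch r psi) /\ cauchy_seq (u r \o psi \o ch r psi).

Fixpoint nested_subseq k : nat -> nat :=
  if k is k'.+1 then nested_subseq k' \o ch k (nested_subseq k') else ch 0%N id.

Lemma nested_subseq_incr k : strictly_increasing (nested_subseq k).
Proof.
elim: k => [|k IH]; first exact: (@ch_spec 0%N id (fun i => ltnSn i)).1.
exact: (strictly_increasing_comp IH (ch_spec _ IH).1).
Qed.

Lemma nested_subseq_cauchy k : cauchy_seq (u k \o nested_subseq k).
Proof.
case: k => [|k]; first exact: (@ch_spec 0%N id (fun i => ltnSn i)).2.
exact: (ch_spec _ (nested_subseq_incr k)).2.
Qed.

Lemma nested_subseq_tail r k : (r <= k)%N ->
  exists2 s, (forall x, x <= s x)%N & forall x, nested_subseq k x = nested_subseq r (s x).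
Proof.
move=> rk; rewrite -(subnK rk); elim: (k - r)%N => [|d [s s_ge Phi_s]]; first by exists id.
exists (s \o ch (d + r).+1 (nested_subseq (d + r))) => x /=; last by rewrite -Phi_s.
exact: leq_trans (strictly_increasing_ge (ch_spec _ (nested_subseq_incr _)).1 x) (s_ge _).
Qed.

Definition diagonal_subseq x := nested_subseq x x.

Lemma diagonal_subseq_incr : strictly_increasing diagonal_subseq.
Proof.
move=> x; rewrite /diagonal_subseq /=.
have ch_ge := strictly_increasing_ge (ch_spec x.+1 (nested_subseq_incr x)).1 x.+1.
exact: (strictly_increasing_lt (nested_subseq_incr x) ch_ge).
Qed.

Lemma diagonal_subseq_cauchy r : cauchy_seq (u r \o diagonal_subseq).
Proof.
move=> e e0; have [N HN] := nested_subseq_cauchy r e0.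
exists (maxn N r) => k l; rewrite !geq_max => /andP [Nk rk] /andP [Nl rl].
rewrite /diagonal_subseq /=.
have [sk sk_ge ->] := nested_subseq_tail rk; have [sl sl_ge ->] := nested_subseq_tail rl.
by apply: HN; [exact: leq_trans Nk (sk_ge k) | exact: leq_trans Nl (sl_ge l)].
Qed.

End Diagonal.

Lemma diagonal_cauchy (u : nat -> nat -> linf R) :
  (forall r psi, strictly_increasing psi ->
    exists2 phi, strictly_increasing phi & cauchy_seq (u r \o psi \o phi)) ->
  exists2 D, strictly_increasing D & forall r, cauchy_seq (u r \o D).
Proof.
move=> extract.
have exists_ch (rp : nat * (nat -> nat)) : exists phi, strictly_increasing rp.2 ->
    strictly_increasing phi /\ cauchy_seq (u rp.1 \o rp.2 \o phi).
  case: rp => r psi; have [psi_incr|not_incr] := pselect (strictly_increasing psi).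
    by have [phi phi_incr phi_cauchy] := extract r psi psi_incr; exists phi.
  by exists id => /not_incr.
have [ch ch_spec] := choice exists_ch.
have ch_spec' r psi : strictly_increasing psi ->
    strictly_increasing (ch (r, psi)) /\ cauchy_seq (u r \o psi \o ch (r, psi)).
  exact: (ch_spec (r, psi)).
exists (diagonal_subseq (fun r psi => ch (r, psi))).
  exact: diagonal_subseq_incr ch_spec'.
exact: diagonal_subseq_cauchy ch_spec'.
Qed.

End Cauchy.

Section NearCompact.
Variable R : realType.

Definition eventually_near_compact (w : nat -> linf R) := forall e : R, 0 < e ->
  exists C, [/\ compact_sub C, bounded_points C &
    exists N, forall k, (N <= k)%N -> exists2 a, C a & ldist (w k) a < e].

Lemma eventually_near_compact_subseq w psi : strictly_increasing psi ->
  eventually_near_compact w -> eventually_near_compact (w \o psi).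
Proof.
move=> psi_incr wC e e0; have [C [C_compact C_bounded [N HN]]] := wC e e0.
exists C; split => //; exists N => k Nk; apply: HN.
exact: leq_trans Nk (strictly_increasing_ge psi_incr k).
Qed.

Lemma exists_inv_lt (e : R) : 0 < e -> exists r : nat, r.+1%:R^-1 < e.
Proof.
move=> e0; have [N HN] := exists_nat_mul_gt 1 e0; exists N.
by rewrite -div1r ltr_pdivrMr // mulrC HN.
Qed.

Lemma invr_gt0_nat (r : nat) : 0 < r.+1%:R^-1 :> R.
Proof. by rewrite invr_gt0 ltr0Sn. Qed.

Lemma cauchy_subseq_of_near_compact w : (forall k, bounded_seq (w k)) ->
  eventually_near_compact w -> exists2 phi, strictly_increasing phi & cauchy_seq (w \o phi).
Proof.
move=> w_bounded wC.
have approx r : exists a : nat -> linf R, exists C, [/\ compact_sub C, bounded_points C,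
    forall k, C (a k) & exists N, forall k, (N <= k)%N -> ldist (w k) (a k) < r.+1%:R^-1].
  have [C [C_compact C_bounded [N HN]]] := wC _ (invr_gt0_nat r).
  have pick k : exists a, C a /\ ((N <= k)%N -> ldist (w k) a < r.+1%:R^-1).
    have [Nk|kN] := leqP N k; first by have [a Ca ha] := HN k Nk; exists a.
    by have [a Ca _] := HN N (leqnn N); exists a.
  have [a Ha] := choice pick.
  by exists a, C; split => //; [move=> k; exact: (Ha k).1 | exists N => k /(Ha k).2].
have [a Ha] := choice approx.
have [D D_incr a_cauchy] : exists2 D, strictly_increasing D & forall r, cauchy_seq (a r \o D).
  apply: diagonal_cauchy => r psi psi_incr.
  have [C [C_compact C_bounded Ca _]] := Ha r.
  have [phi [phi_incr [x Cx ax]]] := C_compact _ (fun k => Ca (psi k)).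
  exists phi => //; apply: converges_cauchy ax => [k|]; apply: C_bounded => //; exact: Ca.
exists D => // e e0; have [r hr] := exists_inv_lt (divr_gt0 e0 (ltr0n R 3)).
have [C [_ C_bounded Ca [N wa]]] := Ha r.
have [N' HN'] := a_cauchy r _ (divr_gt0 e0 (ltr0n R 3)).
exists (maxn N N') => k l; rewrite !geq_max => /andP [Nk N'k] /andP [Nl N'l] /=.
have wak := wa _ (leq_trans Nk (strictly_increasing_ge D_incr k)).
have wal := wa _ (leq_trans Nl (strictly_increasing_ge D_incr l)).
have aa := HN' k l N'k N'l; rewrite /= in aa.
have bak := C_bounded _ (Ca (D k)); have bal := C_bounded _ (Ca (D l)).
apply: le_lt_trans (ldist_triangle (w_bounded _) bak (w_bounded _)) _.
have := ldist_triangle bak bal (w_bounded (D l)); rewrite (ldistC (a r (D l))).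
(* [lra] only handles the inverse [1/(r+1)] as an atom. *)
by set E := (r.+1%:R^-1 : R) in hr wak wal *; lra.
Qed.

End NearCompact.

(** * Uniform limits of equi-Lipschitz curves *)

Section Grid.
Variable R : realType.

(* An enumeration of the points [j / N], [j <= N], of [[0, 1]] (with junk value [0]). *)
Definition grid_point (q : nat) : R :=
  if @unpickle (nat * nat)%type q is Some (j, N) then (minn j N)%:R / N%:R else 0.

Lemma grid_point_pickle j N : (j <= N)%N -> grid_point (pickle (j, N)) = j%:R / N%:R.
Proof. by move=> jN; rewrite /grid_point pickleK (minn_idPl jN). Qed.

Lemma grid_point_itv q : 0 <= grid_point q <= 1.
Proof.
rewrite /grid_point; case: unpickle => [[j [|N]]|]; rewrite ?invr0 ?mulr0 ?lexx ?ler01 //.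
by rewrite divr_ge0 //= ler_pdivrMr ?ltr0Sn // mul1r ler_nat geq_minr.
Qed.

Lemma exists_grid_point_near (N : nat) (t : R) : (0 < N)%N -> 0 <= t <= 1 ->
  exists2 j, (j <= N)%N & `|t - j%:R / N%:R| <= N%:R^-1.
Proof.
move=> N0 /andP [t0 t1]; have N0' : 0 < N%:R :> R by rewrite ltr0n.
have tN0 : 0 <= t * N%:R by rewrite mulr_ge0 // ltW.
have /andP [jl jr] := truncn_itv tN0; set j := Num.truncn _ in jl jr *; exists j.
  by rewrite -(ler_nat R); apply: le_trans jl _; rewrite ler_piMl // ltW.
have -> : t - j%:R / N%:R = (t * N%:R - j%:R) / N%:R by field; rewrite gt_eqF.
have Ninv0 : 0 < N%:R^-1 :> R by rewrite invr_gt0.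
rewrite normrM (gtr0_norm Ninv0) ger0_norm ?subr_ge0 // ler_piMl ?ltW //.
by move: jr; rewrite -natr1; lra.
Qed.

End Grid.

Section EquiLipschitz.
Variables (R : realType) (f : nat -> R -> linf R) (L : R).
Hypothesis f_bounded : forall i t, bounded_seq (f i t).
Hypothesis f_lipschitz : forall i t s, ldist (f i t) (f i s) <= L * `|t - s|.

Definition uniformly_cauchy (g : nat -> R -> linf R) := forall e : R, 0 < e -> exists N,
  forall k l, (N <= k)%N -> (N <= l)%N -> forall t, 0 <= t <= 1 -> ldist (g k t) (g l t) < e.

Definition converges_uniformly (g : nat -> R -> linf R) (gamma : R -> linf R) :=
  forall e : R, 0 < e -> exists N, forall i, (N <= i)%N ->
    forall t, 0 <= t <= 1 -> ldist (g i t) (gamma t) < e.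

Lemma lipschitz_const_ge0 : 0 <= L.
Proof.
have := f_lipschitz 0%N 1 0; rewrite subr0 normr1 mulr1.
by apply: le_trans; apply: ldist_ge0.
Qed.

(* Every [t] is [1/N]-close to the finite grid of mesh [1/N], on which the sequence is
   uniformly Cauchy, and [L/N] is small. *)
Lemma uniformly_cauchy_of_grid D :
  (forall q, cauchy_seq (fun k => f (D k) (grid_point R q))) -> uniformly_cauchy (f \o D).
Proof.
move=> grid_cauchy e e0; have e4 : 0 < e / 4 by rewrite divr_gt0.
have [N0 HN0] := exists_nat_mul_gt L e4; pose N := N0.+1.
have LN : L * N%:R^-1 < e / 4 by rewrite ltr_pdivrMr ?ltr0Sn // mulrC HN0.
have column_cauchy j : (j <= N)%N -> cauchy_seq (fun k => f (D k) (j%:R / N%:R)).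
  by move=> jN; rewrite -grid_point_pickle //; apply: grid_cauchy.
have [K HK] := cauchy_seq_common column_cauchy (divr_gt0 e0 (ltr0n R 2)).
exists K => k l Kk Kl t t01.
have [j jN tj] := exists_grid_point_near (ltn0Sn N0) t01.
have Ltj : L * `|t - j%:R / N%:R| < e / 4.
  by apply: le_lt_trans LN; rewrite ler_wpM2l // lipschitz_const_ge0.
have fk := f_lipschitz (D k) t (j%:R / N%:R).
have fl := f_lipschitz (D l) (j%:R / N%:R) t; rewrite distrC in fl.
have kl := HK j jN k l Kk Kl.
have := ldist_triangle (f_bounded (D k) t) (f_bounded (D k) (j%:R / N%:R)) (f_bounded (D l) t).
have := ldist_triangle (f_bounded (D k) (j%:R / N%:R)) (f_bounded (D l) (j%:R / N%:R))
  (f_bounded (D l) t).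
by rewrite /=; lra.
Qed.

Lemma uniformly_cauchy_subseq :
  (forall t, 0 <= t <= 1 -> forall psi, strictly_increasing psi ->
    exists2 phi, strictly_increasing phi & cauchy_seq (fun k => f (psi (phi k)) t)) ->
  exists2 D, strictly_increasing D & uniformly_cauchy (f \o D).
Proof.
move=> pointwise.
have [D D_incr D_cauchy] := @diagonal_cauchy R (fun q i => f i (grid_point R q))
  (fun q psi psi_incr => pointwise _ (grid_point_itv R q) psi psi_incr).
by exists D => //; apply: uniformly_cauchy_of_grid.
Qed.

End EquiLipschitz.

Lemma cvg0_eventually_lt (R : realType) (u : nat -> R) : u @ \oo --> 0 ->
  forall e : R, 0 < e -> exists N, forall i, (N <= i)%N -> u i < e.
Proof.
move=> /cvgrPdist_lt u0 e e0; have [N _ HN] := u0 e e0; exists N => i Ni.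
by apply: le_lt_trans (HN i Ni); rewrite sub0r normrN ler_norm.
Qed.

Section UniformLimit.
Variables (R : realType) (X : set (linf R)) (g : nat -> R -> linf R) (eps : nat -> R).
Hypothesis X_bounded : forall x, X x -> bounded_seq x.
Hypothesis X_complete : complete_sub X.
Hypothesis g_bounded : forall i t, bounded_seq (g i t).
Hypothesis g_cauchy : uniformly_cauchy g.
Hypothesis eps_cvg0 : eps @ \oo --> 0.
Hypothesis g_near_X : forall i t, 0 <= t <= 1 -> exists2 x, X x & ldist (g i t) x <= eps i.

Lemma pointwise_limit t : 0 <= t <= 1 -> exists2 y, X y & converges (fun k => g k t) y.
Proof.
move=> t01; pose x k := s2val (cid2 (g_near_X k t01)).
have Xx k : X (x k) by rewrite /x; case: cid2.
have gx k : ldist (g k t) (x k) <= eps k by rewrite /x; case: cid2.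
have x_cauchy : cauchy_seq x.
  move=> e e0; have e3 : 0 < e / 3 by rewrite divr_gt0.
  have [N1 HN1] := g_cauchy e3; have [N2 HN2] := cvg0_eventually_lt eps_cvg0 e3.
  exists (maxn N1 N2) => k l; rewrite !geq_max => /andP [N1k N2k] /andP [N1l N2l].
  have bxk := X_bounded (Xx k); have bxl := X_bounded (Xx l).
  have := ldist_triangle bxk (g_bounded k t) bxl.
  have := ldist_triangle (g_bounded k t) (g_bounded l t) bxl.
  have := HN1 k l N1k N1l t t01; have := HN2 k N2k; have := HN2 l N2l.
  have := gx k; have := gx l; rewrite (ldistC (x k) (g k t)); lra.
have [y Xy xy] := X_complete Xx x_cauchy.
exists y => // e e0; have e2 : 0 < e / 2 by rewrite divr_gt0.
have [N1 HN1] := xy _ e2; have [N2 HN2] := cvg0_eventually_lt eps_cvg0 e2.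
exists (maxn N1 N2) => k; rewrite geq_max => /andP [N1k N2k].
have := ldist_triangle (g_bounded k t) (X_bounded (Xx k)) (X_bounded Xy).
have := HN1 k N1k; have := HN2 k N2k; have := gx k; lra.
Qed.

Lemma uniform_limit : exists gamma,
  (forall t, 0 <= t <= 1 -> X (gamma t)) /\ converges_uniformly g gamma.
Proof.
have limit_at t : exists y, 0 <= t <= 1 -> X y /\ converges (fun k => g k t) y.
  have [t01|t_out] := pselect (0 <= t <= 1); last by exists (g 0%N t) => /t_out.
  by have [y Xy gy] := pointwise_limit t01; exists y.
have [gamma Hgamma] := choice limit_at.
exists gamma; split => [t t01|e e0]; first exact: (Hgamma t t01).1.
have e2 : 0 < e / 2 by rewrite divr_gt0.
have [N HN] := g_cauchy e2; exists N => i Ni t t01.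
have [Xgt gt] := Hgamma t t01; have [Nt HNt] := gt _ e2.
have Nl := leq_maxl N Nt; have Ntl := leq_maxr N Nt.
have := ldist_triangle (g_bounded i t) (g_bounded (maxn N Nt) t) (X_bounded Xgt).
have := HN i _ Ni Nl t t01; have := HNt _ Ntl; lra.
Qed.

End UniformLimit.

Section LipschitzLimit.
Variables (R : realType) (g : nat -> R -> linf R) (gamma : R -> linf R) (L : R).
Hypothesis g_bounded : forall i t, bounded_seq (g i t).
Hypothesis g_lipschitz : forall i t s, ldist (g i t) (g i s) <= L * `|t - s|.
Hypothesis gamma_bounded : forall t, 0 <= t <= 1 -> bounded_seq (gamma t).
Hypothesis g_gamma : converges_uniformly g gamma.

Lemma uniform_limit_lipschitz t s : 0 <= t <= 1 -> 0 <= s <= 1 ->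
  ldist (gamma t) (gamma s) <= L * `|t - s|.
Proof.
move=> t01 s01; apply/ler_addgt0Pr => e e0.
have [N HN] := g_gamma (divr_gt0 e0 (ltr0n R 2)).
have := ldist_triangle (gamma_bounded t01) (g_bounded N t) (gamma_bounded s01).
have := ldist_triangle (g_bounded N t) (g_bounded N s) (gamma_bounded s01).
have := HN N (leqnn N) t t01; have := HN N (leqnn N) s s01; have := g_lipschitz N t s.
rewrite (ldistC (gamma t) (g N t)); lra.
Qed.

Lemma limit_curve_continuous t : 0 <= t <= 1 -> forall e : R, 0 < e ->
  exists2 d : R, 0 < d &
    forall s, 0 <= s <= 1 -> `|s - t| < d -> ldist (gamma s) (gamma t) < e.
Proof.
move=> t01 e e0; have L0 := lipschitz_const_ge0 g_bounded g_lipschitz.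
exists (e / (L + 1)); first by rewrite divr_gt0 // ltr_wpDl.
move=> s s01 st; apply: le_lt_trans (uniform_limit_lipschitz s01 t01) _.
have L1 : 0 < L + 1 by rewrite ltr_wpDl.
have st' : `|s - t| * (L + 1) < e by rewrite -ltr_pdivlMr.
by have := normr_ge0 (s - t); nra.
Qed.

End LipschitzLimit.

Lemma cvg_subseq (T : topologicalType) (u : nat -> T) (l : T) (phi : nat -> nat) :
  strictly_increasing phi -> u @ \oo --> l -> (u \o phi) @ \oo --> l.
Proof.
move=> phi_incr ul; apply: cvg_comp _ ul; apply/cvgnyPge => A; exists A => // k /= Ak.
exact: leq_trans Ak (strictly_increasing_ge phi_incr k).
Qed.

Section Interpolants.
Variables (R : realType) (X : set (linf R)) (K : nat -> set (linf R)) (M L Delta : R).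
Variables (n : nat -> nat) (p : nat -> nat -> linf R).
Hypothesis X_bounded : forall x, X x -> bounded_seq x.
Hypothesis K_spec : forall m, (1 <= m)%N -> K m !=set0 /\ compact_sub (K m) /\ K m `<=` X.
Hypothesis K_increasing : forall m1 m2, (1 <= m1)%N -> (m1 <= m2)%N -> K m1 `<=` K m2.
Hypothesis Delta_gt0 : 0 < Delta.
Hypothesis p_in_X :
  forall i, (1 <= i)%N -> (1 <= n i)%N /\ forall k, (k <= n i)%N -> X (p i k).
Hypothesis Mesh_cvg0 : (fun i => Mesh (n i) (p i)) @ \oo --> (0 : R).
Hypothesis Len_le : forall i, (1 <= i)%N -> Len (n i) (p i) <= L.
Hypothesis diam_ge : forall i, (1 <= i)%N -> Delta <= diam (n i) (p i).
Hypothesis weighted_len_le :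
  forall i, (1 <= i)%N -> weighted_len (hfun K i) (n i) (p i) <= M.

(* The hypotheses only hold from index [1] on, hence the shift. *)
Definition interpolant i := gammaP (n i.+1) (p i.+1).

Lemma K_bounded m : (1 <= m)%N -> bounded_points (K m).
Proof. by move=> m1 a /(K_spec m1).2.2; apply: X_bounded. Qed.

Lemma node_bounded i k : (k <= n i.+1)%N -> bounded_seq (p i.+1 k).
Proof. by move=> kn; apply: X_bounded; apply: (p_in_X (ltn0Sn i)).2. Qed.

Lemma interpolant_Len_gt0 i : 0 < Len (n i.+1) (p i.+1).
Proof.
apply: lt_le_trans Delta_gt0 (le_trans (diam_ge (ltn0Sn i)) _).
exact: diam_le_Len (@node_bounded i).
Qed.

Lemma interpolant_bounded i t : bounded_seq (interpolant i t).
Proof. exact: gammaP_bounded (@node_bounded i) (interpolant_Len_gt0 i) t. Qed.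

Lemma interpolant_lipschitz i t s :
  ldist (interpolant i t) (interpolant i s) <= L * `|t - s|.
Proof.
apply: le_trans (ldist_gammaP (@node_bounded i) (interpolant_Len_gt0 i) t s) _.
by rewrite ler_wpM2r // Len_le.
Qed.

Lemma interpolant_near_X i t : 0 <= t <= 1 ->
  exists2 x, X x & ldist (interpolant i t) x <= Mesh (n i.+1) (p i.+1).
Proof.
move=> t01; have [k kn hk] := gammaP_near_node (@node_bounded i) (interpolant_Len_gt0 i) t01.
by exists (p i.+1 k) => //; apply: (p_in_X (ltn0Sn i)).2.
Qed.

Lemma interpolant_near_compact t : 0 <= t <= 1 ->
  eventually_near_compact (fun i => interpolant i t).
Proof.
move=> t01 e e0; have e3 : 0 < e / 3 by rewrite divr_gt0.
have [m1 Hm1] := exists_nat_mul_gt M Delta_gt0.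
have [m2 Hm2] := exists_nat_mul_gt M e3.
pose m := maxn 1 (maxn m1 m2).
have m_ge1 : (1 <= m)%N by rewrite leq_maxl.
have [m_ge_m1 m_ge_m2] : (m1 <= m)%N /\ (m2 <= m)%N by split; rewrite !leq_max leqnn !orbT.
have [_ [K_compact _]] := K_spec m_ge1.
exists (K m); split => //; first exact: K_bounded.
have [N1 HN1] := cvg0_eventually_lt Mesh_cvg0 (divr_gt0 e0 (ltr0n R 6)).
have [N2 HN2] := exists_nat_mul_gt 1 e3.
exists (maxn m (maxn N1 N2)) => i.
rewrite geq_max => /andP [mi]; rewrite geq_max => /andP [N1i N2i].
have [a Ka ha] := gammaP_near_K (fun k k1 => (K_spec k1).1) K_bounded K_increasing m_ge1
  (leqW mi) (@node_bounded i) (weighted_len_le (ltn0Sn i)) (diam_ge (ltn0Sn i))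
  (Hm1 m m_ge_m1) (interpolant_Len_gt0 i) t01.
exists a => //; apply: le_lt_trans ha _.
have inv_lt : (i.+1%:R^-1 : R) < e / 3.
  by rewrite -div1r ltr_pdivrMr ?ltr0Sn // mulrC HN2 // leqW.
have mesh_lt := HN1 i.+1 (leqW N1i).
have Mm_lt : M / m%:R < e / 3 by rewrite ltr_pdivrMr ?ltr0n // mulrC Hm2.
by set E := (i.+1%:R^-1 : R) in inv_lt *; lra.
Qed.

End Interpolants.

Theorem lemma2p7 (R : realType) (X : set (linf R))
  (K : nat -> set (linf R)) (M L Delta : R)
  (n : nat -> nat) (p : nat -> nat -> linf R) :
  (forall x, X x -> bounded_seq x) ->
  complete_sub X -> separable_sub X ->
  (forall m, (1 <= m)%N -> K m !=set0 /\ compact_sub (K m) /\ K m `<=` X) ->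
  (forall m1 m2, (1 <= m1)%N -> (m1 <= m2)%N -> K m1 `<=` K m2) ->
  0 < M -> 0 < L -> 0 < Delta ->
  (forall i, (1 <= i)%N -> (1 <= n i)%N /\ forall k, (k <= n i)%N -> X (p i k)) ->
  (fun i => Mesh (n i) (p i)) @ \oo --> (0 : R) ->
  (forall i, (1 <= i)%N -> Len (n i) (p i) <= L) ->
  (forall i, (1 <= i)%N -> Delta <= diam (n i) (p i)) ->
  (forall i, (1 <= i)%N -> weighted_len (hfun K i) (n i) (p i) <= M) ->
  exists phi : nat -> nat, (forall i, (phi i < phi i.+1)%N) /\
    exists gamma : R -> linf R, curve_in X gamma /\
      paths_converge (fun i => n (phi i)) (fun i => p (phi i)) gamma.
Proof.
move=> X_bounded X_complete _ K_spec K_increasing _ _ Delta_gt0 p_in_X Mesh_cvg0 Len_le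
  diam_ge weighted_len_le.
have f_bounded := interpolant_bounded X_bounded Delta_gt0 p_in_X diam_ge.
have f_lipschitz := interpolant_lipschitz X_bounded Delta_gt0 p_in_X Len_le diam_ge.
have f_near_compact := interpolant_near_compact X_bounded K_spec K_increasing Delta_gt0 p_in_X
  Mesh_cvg0 diam_ge weighted_len_le.
have pointwise t : 0 <= t <= 1 -> forall psi, strictly_increasing psi ->
    exists2 phi, strictly_increasing phi & cauchy_seq (fun k => interpolant n p (psi (phi k)) t).
  move=> t01 psi psi_incr; apply: cauchy_subseq_of_near_compact (fun k => f_bounded _ t) _.
  exact: eventually_near_compact_subseq psi_incr (f_near_compact t t01).
have [D D_incr f_cauchy] := uniformly_cauchy_subseq f_bounded f_lipschitz pointwise.
have succD_incr : strictly_increasing (fun k => (D k).+1) by move=> k; rewrite ltnS D_incr.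
have Mesh_D_cvg0 := cvg_subseq succD_incr Mesh_cvg0.
have [gamma [gamma_X f_gamma]] := uniform_limit X_bounded X_complete (fun i => f_bounded (D i))
  f_cauchy Mesh_D_cvg0 (fun i => interpolant_near_X X_bounded Delta_gt0 p_in_X diam_ge (D i)).
exists (fun k => (D k).+1); split => //; exists gamma; split; last by split.
have gamma_bounded t : 0 <= t <= 1 -> bounded_seq (gamma t) by move/gamma_X/X_bounded.
split => // t; exact: (@limit_curve_continuous _ (interpolant n p \o D) _ _
  (fun i => f_bounded (D i)) (fun i => f_lipschitz (D i)) gamma_bounded f_gamma t).
Qed.
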